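(* Let $n\in\mathbb{N}$ be fixed, let $f:[0,1]\times\mathbb{R}^2\to\mathbb{R}$ be continuous with $f(t,0,0)=0$ for all $t\in[0,1]$ and satisfying condition (P2) below, and let $h:[0,1]\to\mathbb{R}$ be continuous with $h(0)=h(1)=0$. Then the discrete boundary value problem $$-\Delta^2x(k-1)+\frac1{n^2}f\!\left(\frac kn,\,n\Delta x(k-1),\,x(k)\right)=\frac1{n^2}h\!\left(\frac kn\right),\qquad x(0)=x(n)=0,$$ has exactly one solution $x\in\mathbb{E}$ (in the weak sense described in the context).
   Context: Condition (P2): for all $s,t,w,z\in\mathbb{R}$ and all $k,l\in[0,1]$, $(s-t)\big(f(k,w,s)-f(l,z,t)\big)\ge 0$. $\Delta x(k)=x(k+1)-x(k)$, $\Delta^2x(k)=\Delta(\Delta x)(k)=x(k+2)-2x(k+1)+x(k)$. $\mathbb{E}=\{x:\{0,1,\dots,n\}\to\mathbb{R}\ :\ x(0)=x(n)=0\}$, an $n$-dimensional... (more precisely $(n-1)$-dimensional) real Hilbert space with inner product $\langle x,y\rangle_{\mathbb{E}}=\sum_{k=1}^n\Delta x(k-1)\Delta y(k-1)$. A solution of the discrete problem is an $x\in\mathbb{E}$ such that for all $y\in\mathbb{E}$: $$\sum_{k=1}^n\Delta x(k-1)\Delta y(k-1)+\frac1{n^2}\sum_{k=1}^n y(k)f\!\left(\frac kn,n\Delta x(k-1),x(k)\right)=\frac1{n^2}\sum_{k=1}^n y(k)h\!\left(\frac kn\right).$$ *)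

From Stdlib Require Import Reals Lra Lia.
Open Scope R_scope.

Definition Delta (x : nat -> R) (k : nat) : R := x (S k) - x k.

Fixpoint sum_1_to (g : nat -> R) (n : nat) : R :=
  match n with
  | O => 0
  | S m => sum_1_to g m + g (S m)
  end.

(* Membership in E: x(0) = x(n) = 0 (only the values on {0,...,n} matter). *)
Definition inE (n : nat) (x : nat -> R) : Prop := x 0%nat = 0 /\ x n = 0.

Definition continuous_on_I_R2 (f : R -> R -> R -> R) : Prop :=
  forall t w s, 0 <= t <= 1 ->
  forall eps, 0 < eps -> exists delta, 0 < delta /\
    forall t' w' s', 0 <= t' <= 1 ->
      Rabs (t' - t) < delta -> Rabs (w' - w) < delta -> Rabs (s' - s) < delta ->
      Rabs (f t' w' s' - f t w s) < eps.

Definition continuous_on_I (h : R -> R) : Prop :=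
  forall t, 0 <= t <= 1 ->
  forall eps, 0 < eps -> exists delta, 0 < delta /\
    forall t', 0 <= t' <= 1 -> Rabs (t' - t) < delta -> Rabs (h t' - h t) < eps.

Definition P2 (f : R -> R -> R -> R) : Prop :=
  forall s t w z k l, 0 <= k <= 1 -> 0 <= l <= 1 ->
    (s - t) * (f k w s - f l z t) >= 0.

(* Weak solution of the discrete BVP. *)
Definition is_solution (n : nat) (f : R -> R -> R -> R) (h : R -> R)
    (x : nat -> R) : Prop :=
  inE n x /\
  forall y : nat -> R, inE n y ->
    sum_1_to (fun k => Delta x (k - 1) * Delta y (k - 1)) n
    + / (INR n ^ 2) * sum_1_to (fun k =>
          y k * f (INR k / INR n) (INR n * Delta x (k - 1)) (x k)) n
    = / (INR n ^ 2) * sum_1_to (fun k => y k * h (INR k / INR n)) n.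

(* Condition (P2), read with s > t, says that f(l, z, t) <= f(k, w, s) for
   all k, l, w, z; letting t increase to s and using continuity, f does not
   depend on its first two arguments and is a nondecreasing continuous
   function g of the last one. A weak solution is then exactly a solution of
   the recurrence x(k+1) = 2 x(k) - x(k-1) + (g(x(k)) - h(k/n)) / n^2 with
   x(0) = x(n) = 0. Shooting from x(0) = 0, x(1) = a, the map a |-> x_a(n) is
   continuous, and monotonicity of g gives it slope at least n, so it has
   exactly one zero. *)

From Stdlib Require Import Reals Lra Lia.
(* Imported after Reals, whose own [Delta] would otherwise shadow the one of Defs. *)
From Pilot Require Import Defs.
Open Scope R_scope.

Lemma sum_1_to_ext (g1 g2 : nat -> R) (m : nat) :
  (forall k, (1 <= k <= m)%nat -> g1 k = g2 k) ->
  sum_1_to g1 m = sum_1_to g2 m.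
Proof.
  induction m as [|m IH]; intros H; simpl; [reflexivity|].
  rewrite IH by (intros; apply H; lia). rewrite H by lia. reflexivity.
Qed.

Lemma sum_1_to_eq0 (g : nat -> R) (m : nat) :
  (forall k, (1 <= k <= m)%nat -> g k = 0) -> sum_1_to g m = 0.
Proof.
  intros H. rewrite (sum_1_to_ext g (fun _ => 0)) by exact H. clear H.
  induction m as [|m IH]; simpl; [|rewrite IH]; ring.
Qed.

Lemma sum_1_to_lincomb (a1 a2 a3 : nat -> R) (c : R) (m : nat) :
  sum_1_to (fun k => a1 k + c * a2 k - c * a3 k) m =
  sum_1_to a1 m + c * sum_1_to a2 m - c * sum_1_to a3 m.
Proof. induction m as [|m IH]; simpl; [|rewrite IH]; ring. Qed.

Lemma sum_1_to_indicator (g : nat -> R) (j m : nat) : (1 <= j <= m)%nat ->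
  sum_1_to (fun k => (if Nat.eqb k j then 1 else 0) * g k) m = g j.
Proof.
  induction m as [|m IH]; intros Hj; [lia|]. cbn [sum_1_to].
  destruct (Nat.eq_dec j (S m)) as [->|Hne].
  - rewrite sum_1_to_eq0, Nat.eqb_refl; [ring|].
    intros k Hk. destruct (Nat.eqb_spec k (S m)); [lia|ring].
  - rewrite IH by lia. destruct (Nat.eqb_spec (S m) j); [lia|ring].
Qed.

Lemma summation_by_parts (x y : nat -> R) (m : nat) :
  sum_1_to (fun k => Delta x (k - 1) * Delta y (k - 1)) m =
  sum_1_to (fun k => y k * (Delta x (k - 1) - Delta x k)) m
  + y m * Delta x m - y 0%nat * Delta x 0%nat.
Proof.
  induction m as [|m IH]; cbn [sum_1_to]; [ring|].
  rewrite IH. replace (S m - 1)%nat with m by lia. unfold Delta. ring.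
Qed.

Definition residual (n : nat) (f : R -> R -> R -> R) (h : R -> R)
    (x : nat -> R) (k : nat) : R :=
  (Delta x (k - 1) - Delta x k) + / (INR n ^ 2) *
  (f (INR k / INR n) (INR n * Delta x (k - 1)) (x k) - h (INR k / INR n)).

Lemma weak_form_residual n f h x y : inE n y ->
  sum_1_to (fun k => Delta x (k - 1) * Delta y (k - 1)) n
  + / (INR n ^ 2) * sum_1_to (fun k =>
        y k * f (INR k / INR n) (INR n * Delta x (k - 1)) (x k)) n
  - / (INR n ^ 2) * sum_1_to (fun k => y k * h (INR k / INR n)) n
  = sum_1_to (fun k => y k * residual n f h x k) n.
Proof.
  intros [Hy0 Hyn]. rewrite summation_by_parts, Hy0, Hyn.
  rewrite (sum_1_to_ext (fun k => y k * residual n f h x k)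
    (fun k => y k * (Delta x (k - 1) - Delta x k)
     + / (INR n ^ 2) * (y k * f (INR k / INR n) (INR n * Delta x (k - 1)) (x k))
     - / (INR n ^ 2) * (y k * h (INR k / INR n)))).
  - rewrite sum_1_to_lincomb. ring.
  - intros k _. unfold residual. ring.
Qed.

Lemma is_solution_iff_residual n f h x : is_solution n f h x <->
  inE n x /\ forall k, (1 <= k <= n - 1)%nat -> residual n f h x k = 0.
Proof.
  assert (Hweak : forall y, inE n y ->
    sum_1_to (fun k => y k * residual n f h x k) n = 0 <->
    sum_1_to (fun k => Delta x (k - 1) * Delta y (k - 1)) n
    + / (INR n ^ 2) * sum_1_to (fun k =>
          y k * f (INR k / INR n) (INR n * Delta x (k - 1)) (x k)) n
    = / (INR n ^ 2) * sum_1_to (fun k => y k * h (INR k / INR n)) n).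
  { intros y Hy. rewrite <- (weak_form_residual n f h x y Hy). lra. }
  split; intros [HxE Hx]; split; auto.
  - intros j Hj.
    set (e_j := fun k => if Nat.eqb k j then 1 else 0).
    assert (He_j : inE n e_j).
    { unfold e_j; split; [destruct (Nat.eqb_spec 0 j)|destruct (Nat.eqb_spec n j)];
        solve [lia | reflexivity]. }
    rewrite <- (sum_1_to_indicator (residual n f h x) j n) by lia.
    apply Hweak; auto.
  - intros y Hy. apply Hweak; auto. destruct Hy as [_ Hyn].
    apply sum_1_to_eq0. intros k Hk.
    destruct (Nat.eq_dec k n) as [->|Hne]; [rewrite Hyn|rewrite Hx by lia]; ring.
Qed.

Lemma P2_lt (f : R -> R -> R -> R) : P2 f ->
  forall k l w z s t, 0 <= k <= 1 -> 0 <= l <= 1 -> t < s -> f l z t <= f k w s.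
Proof.
  intros HP2 k l w z s t Hk Hl Hts.
  specialize (HP2 s t w z k l Hk Hl).
  destruct (Rle_lt_dec (f l z t) (f k w s)) as [|Hlt]; [assumption|].
  assert ((s - t) * (f k w s - f l z t) < 0) by (apply Rmult_pos_neg; lra).
  lra.
Qed.

Lemma P2_le_first_args (f : R -> R -> R -> R) :
  continuous_on_I_R2 f -> P2 f ->
  forall k l w z s, 0 <= k <= 1 -> 0 <= l <= 1 -> f l z s <= f k w s.
Proof.
  intros Hfc HP2 k l w z s Hk Hl.
  apply Rnot_lt_le. intros Hlt.
  set (eps := (f l z s - f k w s) / 2).
  destruct (Hfc l z s Hl eps) as [d [Hd Hnear]]; [unfold eps; lra|].
  assert (Hclose : Rabs (f l z (s - d / 2) - f l z s) < eps).
  { apply Hnear; rewrite ?Rminus_diag, ?Rabs_R0; try lra.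
    replace (s - d / 2 - s) with (- (d / 2)) by ring.
    rewrite Rabs_Ropp, Rabs_right; lra. }
  pose proof (P2_lt f HP2 k l w z s (s - d / 2) Hk Hl ltac:(lra)).
  apply Rabs_def2 in Hclose. unfold eps in *. lra.
Qed.

Lemma P2_depends_on_last_arg (f : R -> R -> R -> R) :
  continuous_on_I_R2 f -> P2 f ->
  forall t w s, 0 <= t <= 1 -> f t w s = f 0 0 s.
Proof.
  intros Hfc HP2 t w s Ht.
  pose proof (P2_le_first_args f Hfc HP2 0 t 0 w s ltac:(lra) Ht).
  pose proof (P2_le_first_args f Hfc HP2 t 0 w 0 s Ht ltac:(lra)).
  lra.
Qed.

Lemma P2_nondecreasing (f : R -> R -> R -> R) : P2 f ->
  forall s t, t <= s -> f 0 0 t <= f 0 0 s.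
Proof.
  intros HP2 s t [Hts|Heq]; [apply (P2_lt f HP2); lra | subst; lra].
Qed.

Lemma continuous_on_I_R2_last_arg (f : R -> R -> R -> R) :
  continuous_on_I_R2 f -> continuity (fun s => f 0 0 s).
Proof.
  intros Hfc s eps Heps. simpl. unfold R_dist.
  destruct (Hfc 0 0 s ltac:(lra) eps Heps) as [d [Hd Hnear]].
  exists d. split; [lra|]. intros s' [_ Hs'].
  apply Hnear; rewrite ?Rminus_diag, ?Rabs_R0; lra.
Qed.

Lemma INR_ratio_unit_interval (k n : nat) : (0 < n)%nat -> (k <= n)%nat ->
  0 <= INR k / INR n <= 1.
Proof.
  intros Hn Hk.
  assert (0 < INR n) by (apply lt_0_INR; lia).
  assert (INR k <= INR n) by (apply le_INR; lia).
  split.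
  - apply Rmult_le_pos; [apply pos_INR | left; apply Rinv_0_lt_compat; assumption].
  - apply (Rmult_le_reg_r (INR n)); [assumption|].
    unfold Rdiv. rewrite Rmult_assoc, Rinv_l; lra.
Qed.

Lemma expanding_has_root (F : R -> R) : continuity F ->
  (forall a b, a <= b -> b - a <= F b - F a) -> exists a, F a = 0.
Proof.
  intros HFc HF.
  set (M := Rabs (F 0) + 1).
  pose proof (Rle_abs (F 0)). pose proof (Rle_abs (- F 0)). rewrite Rabs_Ropp in *.
  assert (HM : 0 < M) by (unfold M; lra).
  pose proof (HF (- M) 0 ltac:(lra)). pose proof (HF 0 M ltac:(lra)).
  destruct (IVT F (- M) M HFc) as [a [_ Ha]]; unfold M in *; try lra.
  exists a. exact Ha.
Qed.

Lemma expanding_injective (F : R -> R) :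
  (forall a b, a <= b -> b - a <= F b - F a) -> forall a b, F a = F b -> a = b.
Proof.
  intros HF a b Hab.
  destruct (Rle_lt_dec a b) as [Hle|Hlt].
  - pose proof (HF a b Hle). lra.
  - pose proof (HF b a ltac:(lra)). lra.
Qed.

Section Shooting.

Variables (c : R) (g : R -> R) (r : nat -> R).

(* The pair (x(k), x(k+1)) of the solution with x(0) = 0, x(1) = a of
   x(k+2) = 2 x(k+1) - x(k) + c (g(x(k+1)) - r(k+1)). *)
Fixpoint shoot_pair (a : R) (k : nat) : R * R :=
  match k with
  | O => (0, a)
  | S m => (snd (shoot_pair a m),
            2 * snd (shoot_pair a m) - fst (shoot_pair a m)
            + c * (g (snd (shoot_pair a m)) - r (S m)))
  end.

Definition shoot (a : R) (k : nat) : R := fst (shoot_pair a k).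

Lemma shoot_SS a k : shoot a (S (S k)) =
  2 * shoot a (S k) - shoot a k + c * (g (shoot a (S k)) - r (S k)).
Proof. reflexivity. Qed.

Lemma shoot_unique (x : nat -> R) (m : nat) : x 0%nat = 0 ->
  (forall k, (S (S k) <= m)%nat ->
     x (S (S k)) = 2 * x (S k) - x k + c * (g (x (S k)) - r (S k))) ->
  forall k, (k <= m)%nat -> x k = shoot (x 1%nat) k.
Proof.
  intros Hx0 Hrec.
  assert (Hpair : forall k, (S k <= m)%nat ->
            x k = shoot (x 1%nat) k /\ x (S k) = shoot (x 1%nat) (S k)).
  { induction k as [|k IH]; intros Hk; [split; [exact Hx0|reflexivity]|].
    destruct IH as [E0 E1]; [lia|]. split; [exact E1|].
    rewrite shoot_SS, <- E0, <- E1. apply Hrec. exact Hk. }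
  intros [|k] Hk; [exact Hx0|]. apply Hpair. exact Hk.
Qed.

Hypothesis g_continuous : continuity g.

Lemma shoot_continuous k : continuity (fun a => shoot a k).
Proof.
  assert (H : continuity (fun a => fst (shoot_pair a k)) /\
              continuity (fun a => snd (shoot_pair a k))).
  { induction k as [|k [IH1 IH2]]; simpl.
    - split; [apply continuity_const; intros ? ?; reflexivity
             | apply derivable_continuous, derivable_id].
    - split; [exact IH2|].
      apply continuity_plus; [apply continuity_minus;
        [apply continuity_scal|]; assumption|].
      apply continuity_scal, continuity_minus;
        [apply (continuity_comp _ g); assumption
        | apply continuity_const; intros ? ?; reflexivity]. }
  exact (proj1 H).
Qed.

Hypothesis c_nonneg : 0 <= c.
Hypothesis g_nondecreasing : forall s t, t <= s -> g t <= g s.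

(* The increments of shoot b - shoot a are themselves nondecreasing. *)
Lemma shoot_expanding a b : a <= b ->
  forall k, INR k * (b - a) <= shoot b k - shoot a k.
Proof.
  intros Hab.
  assert (H : forall k,
    b - a <= shoot b (S k) - shoot a (S k) - (shoot b k - shoot a k) /\
    INR k * (b - a) <= shoot b k - shoot a k).
  { induction k as [|k [IHinc IHk]]; [unfold shoot; simpl; lra|].
    rewrite S_INR. split; [|lra].
    assert (Hle : shoot a (S k) <= shoot b (S k))
      by (pose proof (pos_INR k); nra).
    pose proof (g_nondecreasing _ _ Hle).
    rewrite !shoot_SS. nra. }
  intros k. apply H.
Qed.

Lemma shoot_endpoint_expanding m : (0 < m)%nat ->
  forall a b, a <= b -> b - a <= shoot b m - shoot a m.
Proof.
  intros Hm a b Hab.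
  assert (1 <= INR m) by (apply (le_INR 1); lia).
  pose proof (shoot_expanding a b Hab m). nra.
Qed.

End Shooting.

Theorem mainTheorem2 (n : nat) (hn : (0 < n)%nat)
  (f : R -> R -> R -> R) (h : R -> R)
  (Hfc : continuous_on_I_R2 f)
  (Hf0 : forall t, 0 <= t <= 1 -> f t 0 0 = 0)
  (HP2 : P2 f)
  (Hhc : continuous_on_I h)
  (Hh0 : h 0 = 0) (Hh1 : h 1 = 0) :
  exists x : nat -> R, is_solution n f h x /\
    forall x' : nat -> R, is_solution n f h x' ->
      forall k : nat, (k <= n)%nat -> x' k = x k.
Proof.
  set (g := fun s => f 0 0 s).
  set (c := / (INR n ^ 2)).
  set (r := fun k => h (INR k / INR n)).
  assert (Hc : 0 <= c) by (left; apply Rinv_0_lt_compat, pow_lt, lt_0_INR, hn).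
  assert (Hgc := continuous_on_I_R2_last_arg f Hfc).
  assert (Hgm := P2_nondecreasing f HP2).
  assert (Hexp := shoot_endpoint_expanding c g r Hc Hgm n hn).
  assert (Hres : forall x k, (S (S k) <= n)%nat ->
    residual n f h x (S k) =
    2 * x (S k) - x k + c * (g (x (S k)) - r (S k)) - x (S (S k))).
  { intros x k Hk. unfold residual, Delta, g, c, r.
    replace (S k - 1)%nat with k by lia.
    rewrite P2_depends_on_last_arg by (auto; apply INR_ratio_unit_interval; lia).
    ring. }
  destruct (expanding_has_root (fun a => shoot c g r a n)
              (shoot_continuous c g r Hgc n) Hexp) as [a Ha].
  exists (shoot c g r a). split.
  - apply is_solution_iff_residual. split; [split; [reflexivity|exact Ha]|].
    intros [|k] Hk; [lia|]. rewrite Hres by lia. rewrite shoot_SS. ring.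
  - intros x' Hx'. apply is_solution_iff_residual in Hx' as [[Hx0 Hxn] Hx].
    assert (Hshoot : forall k, (k <= n)%nat -> x' k = shoot c g r (x' 1%nat) k).
    { apply shoot_unique; [exact Hx0|]. intros k Hk.
      pose proof (Hx (S k) ltac:(lia)). rewrite Hres in * by lia. lra. }
    assert (Hx1 : x' 1%nat = a).
    { apply (expanding_injective _ Hexp). rewrite Ha, <- Hshoot by lia. exact Hxn. }
    intros k Hk. rewrite Hshoot, Hx1 by exact Hk. reflexivity.
Qed.
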